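(* Let $r\ge 2$, $n=2r$, $k=r$, $I=\{1,3,\dots,2r-1\}$, $J=\{2,4,\dots,2r\}$, and let $b_1,\dots,b_{2r}\in\mathbb{C}[[t]]$ with $\sum_{i=1}^{2r}b_i=0$. Let $X'$ be a subset of $\{0,2,4,\dots,2r-2\}$ with $1\le|X'|<r$, and let $X,Y$ be the $r$-subsets of $\{1,\dots,2r\}$ associated with $X'$ as in the context. Suppose that for every $j=0,1,\dots,r-1$ (with the even number $2r$ identified with $0$): $t\mid b_{2j+1}+b_{2j+2}$ if $2j$ and $2j+2$ are either both in $X'$ or both not in $X'$, and $t\nmid b_{2j+1}+b_{2j+2}$ if exactly one of $2j,2j+2$ lies in $X'$. Suppose further that $t\mid b_{p}+b_{p+1}+b_{q}+b_{q+1}$ whenever $p,q$ are two consecutive (in cyclic order) elements of the set of odd indices $i\in\{1,3,\dots,2r-1\}$ with $t\nmid b_i+b_{i+1}$. Then the module $\mathbb{M}(I,J)$ is isomorphic to $L_X\oplus L_Y$.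
   Context: $\Gamma_n$ is the quiver with vertices $1,\dots,n$ on a cycle (vertex $0$ identified with $n$), arrows $x_i\colon i-1\to i$, $y_i\colon i\to i-1$. $B_{k,n}$ is its completed path algebra modulo the closure of the ideal generated by $xy=yx$ and $x^k=y^{n-k}$ at every vertex; its centre is $\mathbb{C}[[t]]$, $t=\sum_ix_iy_i$. For a $k$-subset $S$ of $\{1,\dots,n\}$, the rank $1$ module $L_S$ has $\mathbb{C}[[t]]$ at every vertex, $x_i$ acting as multiplication by $1$ and $y_i$ by $t$ if $i\in S$, and $x_i$ by $t$ and $y_i$ by $1$ if $i\notin S$. Here $\mathbb{M}(I,J)$ is the module with $V_i=\mathbb{C}[[t]]^2$ at every vertex, $x_i=\begin{pmatrix}t&b_i\\0&1\end{pmatrix}$, $y_i=\begin{pmatrix}1&-b_i\\0&t\end{pmatrix}$ for odd $i$, and $x_i=\begin{pmatrix}1&b_i\\0&t\end{pmatrix}$, $y_i=\begin{pmatrix}t&-b_i\\0&1\end{pmatrix}$ for even $i$. The elements of $\{0,2,\dots,2r-2\}$ are the peaks of the rim $I$. Given $X'$, define $X\subset\{1,\dots,2r\}$ as follows: for each $j=0,\dots,r-1$ (with $2r\equiv 0$ for membership in $X'$): if $2j\in X'$ and $2j+2\in X'$, then $2j+1\in X$, $2j+2\notin X$; if $2j\notin X'$ and $2j+2\in X'$, then $2j+1,2j+2\notin X$; if $2j\in X'$ and $2j+2\notin X'$, then $2j+1,2j+2\in X$; if $2j\notin X'$ and $2j+2\notin X'$, then $2j+1\notin X$, $2j+2\in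 X$. Set $Y=\{1,\dots,2r\}\setminus X$ (equivalently, $Y$ is obtained by the same rule from the complement $Y'$ of $X'$ in the set of peaks). *)

From HB Require Import structures.
From mathcomp Require Import all_boot all_order all_algebra.
From mathcomp Require Import boolp reals.
From mathcomp Require Import complex.
Set Implicit Arguments. Unset Strict Implicit. Unset Printing Implicit Defensive.
Import Order.TTheory GRing.Theory Num.Theory.
Local Open Scope ring_scope.

Record fps (K : Type) := FPS { coef : nat -> K }.
Arguments FPS {K}.

Section FPS.
Variable K : comNzRingType.
Local Notation F := (fps K).

HB.instance Definition _ := gen_eqMixin F.
HB.instance Definition _ := gen_choiceMixin F.

Lemma fpsP (f g : F) : coef f =1 coef g -> f = g.
Proof. by case: f; case: g => g f /= e; congr FPS; apply/funext. Qed.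

Definition fps0 : F := FPS (fun=> 0).
Definition fpsN (f : F) : F := FPS (fun n => - coef f n).
Definition fpsD (f g : F) : F := FPS (fun n => coef f n + coef g n).

Fact fpsDA : associative fpsD.
Proof. by move=> f g h; apply: fpsP => n /=; rewrite addrA. Qed.
Fact fpsDC : commutative fpsD.
Proof. by move=> f g; apply: fpsP => n /=; rewrite addrC. Qed.
Fact fps0D : left_id fps0 fpsD.
Proof. by move=> f; apply: fpsP => n /=; rewrite add0r. Qed.
Fact fpsND : left_inverse fps0 fpsN fpsD.
Proof. by move=> f; apply: fpsP => n /=; rewrite addNr. Qed.

HB.instance Definition _ := GRing.isZmodule.Build F fpsDA fpsDC fps0D fpsND.

Definition fps1 : F := FPS (fun n => (n == 0)%:R).
Definition fpsM (f g : F) : F :=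
  FPS (fun n => \sum_(i < n.+1) coef f i * coef g (n - i)).

Lemma coef_fpsM (f g : F) n :
  coef (fpsM f g) n = \sum_(i < n.+1) coef f i * coef g (n - i).
Proof. by []. Qed.

Lemma coef_fpsM_rev (f g : F) n :
  coef (fpsM f g) n = \sum_(i < n.+1) coef f (n - i) * coef g i.
Proof.
rewrite /= (reindex_inj rev_ord_inj); apply: eq_bigr => i _.
have -> : (rev_ord i : nat) = (n - i)%N by rewrite /= subSS.
by rewrite subKn // -ltnS.
Qed.

Fact fpsMA : associative fpsM.
Proof.
move=> p q r; apply: fpsP => i; rewrite coef_fpsM [RHS]coef_fpsM_rev.
pose coef3 j k := coef p j * (coef q (i - j - k)%N * coef r k).
transitivity (\sum_(j < i.+1) \sum_(k < i.+1 | (k <= i - j)%N) coef3 j k).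
  apply: eq_bigr => j _; rewrite coef_fpsM_rev big_distrr /=.
  by rewrite (big_ord_narrow_leq (leq_subr _ _)).
rewrite (exchange_big_dep predT) //=; apply: eq_bigr => k _.
transitivity (\sum_(j < i.+1 | (j <= i - k)%N) coef3 j k).
  apply: eq_bigl => j; rewrite -ltnS -(ltnS j) -!subSn ?leq_ord //.
  by rewrite -subn_gt0 -(subn_gt0 j) -!subnDA addnC.
rewrite (big_ord_narrow_leq (leq_subr _ _)) big_distrl /=. idtac.
by apply: eq_bigr => j _; rewrite /coef3 -!subnDA [(j + k)%N]addnC mulrA.
Qed.

Fact fpsMC : commutative fpsM.
Proof.
move=> f g; apply: fpsP => n; rewrite coef_fpsM_rev /=.
by apply: eq_bigr => i _; rewrite mulrC.
Qed.

Fact fps1M : left_id fps1 fpsM.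
Proof.
move=> f; apply: fpsP => n /=; rewrite big_ord_recl /= mul1r subn0.
by rewrite big1 ?addr0 // => i _; rewrite mul0r.
Qed.

Fact fpsMDl : left_distributive fpsM fpsD.
Proof.
move=> f g h; apply: fpsP => n /=; rewrite -big_split /=.
by apply: eq_bigr => i _; rewrite mulrDl.
Qed.

Fact fps1_neq0 : fps1 != fps0.
Proof.
apply/eqP => /(congr1 (fun f => coef f 0)) /= /eqP.
by rewrite oner_eq0.
Qed.

HB.instance Definition _ :=
  GRing.Zmodule_isComNzRing.Build F fpsMA fpsMC fps1M fpsMDl fps1_neq0.

Definition fpsX : F := FPS (fun n => (n == 1)%:R).

End FPS.

Definition tdvd (K : comNzRingType) (f : fps K) : Prop :=
  exists g : fps K, f = fpsX K * g.

(* Representations of the quiver Gamma_n by free A-modules of rank m.  *)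
(* Vertices 1..n (vertex 0 identified with n); arrow x_i : i-1 -> i,   *)
(* y_i : i -> i-1, for i = 1..n.  A module is given by the matrices of *)
(* x_i and y_i, acting on column vectors (v |-> x_i *m v).             *)
Definition prevv (n i : nat) : nat := if i == 1%N then n else i.-1.

Definition rep_iso (A : comNzRingType) (m n : nat)
  (x y x' y' : nat -> 'M[A]_m) : Prop :=
  exists g h : nat -> 'M[A]_m,
    (forall j, (1 <= j <= n)%N -> g j *m h j = 1%:M /\ h j *m g j = 1%:M) /\
    (forall i, (1 <= i <= n)%N ->
        g i *m x i = x' i *m g (prevv n i) /\
        g (prevv n i) *m y i = y' i *m g i).

Arguments rep_iso {A} m n x y x' y'.

Definition mx2 (A : Type) (a b c d : A) : 'M[A]_2 :=
  \matrix_(i < 2, j < 2)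
    if (i : nat) == 0%N then (if (j : nat) == 0%N then a else b)
    else (if (j : nat) == 0%N then c else d).

Section Modules.
Variable A : comNzRingType.
Variable t : A.

(* M(I,J) with I odd, J even, given b_1..b_n *)
Definition MIJ_x (b : nat -> A) (i : nat) : 'M[A]_2 :=
  if odd i then mx2 t (b i) 0 1 else mx2 1 (b i) 0 t.
Definition MIJ_y (b : nat -> A) (i : nat) : 'M[A]_2 :=
  if odd i then mx2 1 (- b i) 0 t else mx2 t (- b i) 0 1.

Definition LS_x (S : pred nat) (i : nat) : A := if S i then 1 else t.
Definition LS_y (S : pred nat) (i : nat) : A := if S i then t else 1.
Definition LXY_x (X Y : pred nat) (i : nat) : 'M[A]_2 :=
  mx2 (LS_x X i) 0 0 (LS_x Y i).
Definition LXY_y (X Y : pred nat) (i : nat) : 'M[A]_2 :=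
  mx2 (LS_y X i) 0 0 (LS_y Y i).
End Modules.

Definition inXp (r : nat) (Xp : {set 'I_(2 * r)}) (m : nat) : bool :=
  [exists p in Xp, (p : nat) == (m %% (2 * r))%N].

Definition Xset (r : nat) (Xp : {set 'I_(2 * r)}) (m : nat) : bool :=
  let j := (m.-1)./2 in
  let a := inXp Xp (2 * j) in
  let c := inXp Xp (2 * j + 2) in
  [&& (1 <= m)%N, (m <= 2 * r)%N &
   if odd m then (* m = 2j+1 *)
     match a, c with
     | true, true => true | false, true => false
     | true, false => true | false, false => false end
   else (* m = 2j+2 *)
     match a, c with
     | true, true => false | false, true => false
     | true, false => true | false, false => true end].

Definition Yset (r : nat) (Xp : {set 'I_(2 * r)}) (m : nat) : bool :=
  [&& (1 <= m)%N, (m <= 2 * r)%N & ~~ Xset Xp m].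

Definition cyc_consecutive (O : nat -> Prop) (p q : nat) : Prop :=
  [/\ O p, O q, p <> q &
      forall s, O s -> ~ (if (p < q)%N then (p < s < q)%N
                          else (p < s)%N || (s < q)%N)].

(* The isomorphism is a gauge transformation by 2x2 matrices over C[[t]] whose
   determinants are all the same nonzero constant.  Let P_j = b_1 + ... + b_2j.
   By the divisibility hypotheses the constant term of b_2j+1 + b_2j+2 vanishes
   unless 2j and 2j+2 lie on different sides of X', and these constant terms
   alternate in sign along the successive changes of side; hence the constant term
   of P_j only takes two values: B when 2j is not in X' and B' when it is.  The gauge
     [[1, B - P_j - b_2j+1], [1, B' - P_j - b_2j+1]]   at vertex 2j+1,
     [[t, B - P_j], [1, (B' - P_j)/t]]                 at vertex 2j if 2j is in X',
     [[1, (B - P_j)/t], [t, B' - P_j]]                 at vertex 2j otherwise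
   has determinant B' - B everywhere, and sum b_i = 0 makes it consistent around
   the cycle. *)

From HB Require Import structures.
From mathcomp Require Import all_boot all_order all_algebra.
From mathcomp Require Import boolp reals complex.
From mathcomp Require Import ring zify.
Import Order.TTheory GRing.Theory Num.Theory.
Local Open Scope ring_scope.
Set Implicit Arguments. Unset Strict Implicit.

Section PowerSeries.
Variable K : comNzRingType.
Local Notation t := (fpsX K).

Lemma coef_fpsD (f g : fps K) n : coef (f + g) n = coef f n + coef g n.
Proof. by []. Qed.

Lemma coef_fpsB (f g : fps K) n : coef (f - g) n = coef f n - coef g n.
Proof. by []. Qed.

Lemma coef_tM (g : fps K) n : coef (t * g) n = if n is m.+1 then coef g m else 0.
Proof.
rewrite coef_fpsM; case: n => [|n]; first by rewrite big_ord1 /= mul0r.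
rewrite big_ord_recl /= mul0r add0r big_ord_recl /= mul1r subn1 /=.
by rewrite big1 ?addr0 // => i _; rewrite /= mul0r.
Qed.

Definition fps_divt (f : fps K) : fps K := FPS (fun n => coef f n.+1).

Lemma fps_divtK (f : fps K) : coef f 0 = 0 -> t * fps_divt f = f.
Proof. by move=> f0; apply: fpsP => -[|n]; rewrite coef_tM. Qed.

Lemma tdvdP (f : fps K) : tdvd f <-> coef f 0 = 0.
Proof.
split; first by case=> g ->; rewrite coef_tM.
by move=> f0; exists (fps_divt f); rewrite fps_divtK.
Qed.

Definition fpsC (a : K) : fps K := FPS (fun n => if n == 0%N then a else 0).

Lemma fpsCB a a' : fpsC (a - a') = fpsC a - fpsC a'.
Proof. by apply: fpsP => -[|n]; rewrite coef_fpsB /= ?subr0. Qed.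

Lemma fpsCM a a' : fpsC a * fpsC a' = fpsC (a * a').
Proof.
apply: fpsP => n; rewrite coef_fpsM big_ord_recl big1 ?addr0 => [|i _].
  by rewrite subn0 /=; case: (n == 0%N); rewrite ?mulr0.
by rewrite /= mul0r.
Qed.

Lemma fpsC1 : fpsC 1 = 1.
Proof. by apply: fpsP => -[|n]. Qed.

End PowerSeries.

Section TwoByTwo.
Variable A : comNzRingType.

Lemma mul_mx2 (a b c d a' b' c' d' : A) :
  mx2 a b c d *m mx2 a' b' c' d' =
  mx2 (a * a' + b * c') (a * b' + b * d') (c * a' + d * c') (c * b' + d * d').
Proof.
apply/matrixP => i j; rewrite !mxE big_ord_recl big_ord1 !mxE.
by case: i j => [[|[|?]] ?] [[|[|?]] ?].
Qed.

Lemma mx2_1 : (1%:M : 'M[A]_2) = mx2 1 0 0 1.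
Proof.
apply/matrixP => i j; rewrite !mxE.
by case: i j => [[|[|?]] ?] [[|[|?]] ?].
Qed.

Definition scaled_adj2 (k : A) (M : 'M[A]_2) : 'M[A]_2 :=
  mx2 (k * M ord_max ord_max) (- (k * M ord0 ord_max))
      (- (k * M ord_max ord0)) (k * M ord0 ord0).

Lemma scaled_adj2K k (a b c d : A) : k * (a * d - b * c) = 1 ->
  mx2 a b c d *m scaled_adj2 k (mx2 a b c d) = 1%:M /\
  scaled_adj2 k (mx2 a b c d) *m mx2 a b c d = 1%:M.
Proof.
move=> kdet; rewrite /scaled_adj2 !mxE /= mx2_1 !mul_mx2.
by split; congr mx2; rewrite -?kdet; ring.
Qed.

End TwoByTwo.

Section GaugeSteps.
Variables (A : comNzRingType) (t B B' P b D : A).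

Lemma odd_arrow_in : t * D = B' - P ->
  mx2 1 (B - P - b) 1 (B' - P - b) *m mx2 t b 0 1 = mx2 1 0 0 t *m mx2 t (B - P) 1 D /\
  mx2 t (B - P) 1 D *m mx2 1 (- b) 0 t = mx2 t 0 0 1 *m mx2 1 (B - P - b) 1 (B' - P - b).
Proof.
move=> tD; have -> : B' = t * D + P by rewrite tD; ring.
by rewrite !mul_mx2; split; congr mx2; ring.
Qed.

Lemma odd_arrow_out : t * D = B - P ->
  mx2 1 (B - P - b) 1 (B' - P - b) *m mx2 t b 0 1 = mx2 t 0 0 1 *m mx2 1 D t (B' - P) /\
  mx2 1 D t (B' - P) *m mx2 1 (- b) 0 t = mx2 1 0 0 t *m mx2 1 (B - P - b) 1 (B' - P - b).
Proof.
move=> tD; have -> : B = t * D + P by rewrite tD; ring.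
by rewrite !mul_mx2; split; congr mx2; ring.
Qed.

Lemma even_arrow_in : t * D = B' - P ->
  mx2 t (B - P) 1 D *m mx2 1 b 0 t = mx2 t 0 0 1 *m mx2 1 (B - P + b) 1 (B' - P + b) /\
  mx2 1 (B - P + b) 1 (B' - P + b) *m mx2 t (- b) 0 1 = mx2 1 0 0 t *m mx2 t (B - P) 1 D.
Proof.
move=> tD; have -> : B' = t * D + P by rewrite tD; ring.
by rewrite !mul_mx2; split; congr mx2; ring.
Qed.

Lemma even_arrow_out : t * D = B - P ->
  mx2 1 D t (B' - P) *m mx2 1 b 0 t = mx2 1 0 0 t *m mx2 1 (B - P + b) 1 (B' - P + b) /\
  mx2 1 (B - P + b) 1 (B' - P + b) *m mx2 t (- b) 0 1 = mx2 t 0 0 1 *m mx2 1 D t (B' - P).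
Proof.
move=> tD; have -> : B = t * D + P by rewrite tD; ring.
by rewrite !mul_mx2; split; congr mx2; ring.
Qed.

End GaugeSteps.

Definition partial_sum (K : comNzRingType) (b : nat -> fps K) (j : nat) : fps K :=
  \sum_(1 <= k < (2 * j).+1) b k.

Lemma partial_sum0 (K : comNzRingType) (b : nat -> fps K) : partial_sum b 0 = 0.
Proof. by rewrite /partial_sum big_geq. Qed.

Lemma partial_sumS (K : comNzRingType) (b : nat -> fps K) j :
  partial_sum b j.+1 = partial_sum b j + b (2 * j).+1 + b (2 * j).+2.
Proof. by rewrite /partial_sum mulnSr addn2 big_nat_recr // big_nat_recr. Qed.

Lemma vertex_cases r i : (1 <= i <= 2 * r)%N ->
  exists2 j, (j < r)%N & i = (2 * j).+1 \/ i = (2 * j).+2.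
Proof.
move=> /andP [i1 ir]; exists i.-1./2; have := odd_double_half i.-1; rewrite -mul2n.
  by case: odd => /=; lia.
by case: odd => /= ?; [right | left]; lia.
Qed.

Lemma odd_mul2 j : odd (2 * j) = false.
Proof. by rewrite oddM. Qed.

Lemma half_mul2 j : (2 * j)./2 = j.
Proof. by rewrite mul2n doubleK. Qed.

Lemma uphalf_mul2 j : uphalf (2 * j) = j.
Proof. by rewrite mul2n uphalf_double. Qed.

Section Gauge.
Variables (K : fieldType) (r : nat) (b : nat -> fps K) (peak : nat -> bool).
Variables (X Y : pred nat) (alpha alpha' : K).
Local Notation t := (fpsX K).
Local Notation P := (partial_sum b).
Hypothesis sum_b : P r = 0.
Hypothesis peak_wrap : peak r = peak 0.
Hypothesis P_coef0 : forall j, (j <= r)%N -> coef (P j) 0 = if peak j then alpha' else alpha.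
Hypothesis alpha_neq : alpha != alpha'.
Hypothesis X_odd : forall j, (j < r)%N -> X (2 * j).+1 = peak j.
Hypothesis X_even : forall j, (j < r)%N -> X (2 * j).+2 = ~~ peak j.+1.
Hypothesis Y_odd : forall j, (j < r)%N -> Y (2 * j).+1 = ~~ peak j.
Hypothesis Y_even : forall j, (j < r)%N -> Y (2 * j).+2 = peak j.+1.

Let B := fpsC alpha.
Let B' := fpsC alpha'.

Lemma divt_out j : (j <= r)%N -> ~~ peak j -> t * fps_divt (B - P j) = B - P j.
Proof. by move=> jr pj; rewrite fps_divtK // coef_fpsB P_coef0 // (negbTE pj) subrr. Qed.

Lemma divt_in j : (j <= r)%N -> peak j -> t * fps_divt (B' - P j) = B' - P j.
Proof. by move=> jr pj; rewrite fps_divtK // coef_fpsB P_coef0 // pj subrr. Qed.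

Definition gauge_even j :=
  if peak j then mx2 t (B - P j) 1 (fps_divt (B' - P j))
  else mx2 1 (fps_divt (B - P j)) t (B' - P j).

Definition gauge_odd j := mx2 1 (B - P j - b (2 * j).+1) 1 (B' - P j - b (2 * j).+1).

Definition gauge i := if odd i then gauge_odd i./2 else gauge_even i./2.

Let k := fpsC (alpha' - alpha)^-1.

Lemma gauge_det_inv : k * (B' - B) = 1.
Proof. by rewrite /k -fpsCB fpsCM mulVf ?fpsC1 // subr_eq0 eq_sym. Qed.

Lemma gauge_mul2 j : gauge (2 * j) = gauge_even j.
Proof. by rewrite /gauge odd_mul2 half_mul2. Qed.

Lemma gauge_mul2S j : gauge (2 * j).+1 = gauge_odd j.
Proof. by rewrite /gauge /= odd_mul2 uphalf_mul2. Qed.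

Lemma gauge_mul2SS j : gauge (2 * j).+2 = gauge_even j.+1.
Proof. by rewrite -[(2 * j).+2]addn2 -mulnSr gauge_mul2. Qed.

Lemma gauge_unit i : (1 <= i <= 2 * r)%N ->
  gauge i *m scaled_adj2 k (gauge i) = 1%:M /\ scaled_adj2 k (gauge i) *m gauge i = 1%:M.
Proof.
move=> /vertex_cases [j jr [-> | ->]]; rewrite ?gauge_mul2S ?gauge_mul2SS.
  by apply: scaled_adj2K; rewrite -[RHS]gauge_det_inv; congr (_ * _); ring.
rewrite /gauge_even; case: ifP => pj; apply: scaled_adj2K.
  by rewrite divt_in // -[RHS]gauge_det_inv; congr (_ * _); ring.
by rewrite [_ * t]mulrC divt_out ?pj // -[RHS]gauge_det_inv; congr (_ * _); ring.
Qed.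

Lemma gauge_prev_odd j : (j < r)%N -> gauge (prevv (2 * r) (2 * j).+1) = gauge_even j.
Proof.
move=> jr; rewrite /prevv; case: eqP => [/eqP | _]; last exact: gauge_mul2.
rewrite eqSS muln_eq0 /= => /eqP ->.
by rewrite gauge_mul2 /gauge_even sum_b partial_sum0 peak_wrap.
Qed.

Lemma gauge_prev_even j : gauge (prevv (2 * r) (2 * j).+2) = gauge_odd j.
Proof. exact: gauge_mul2S. Qed.

Lemma gauge_odd_arrow j : (j < r)%N ->
  gauge (2 * j).+1 *m MIJ_x t b (2 * j).+1 =
    LXY_x t X Y (2 * j).+1 *m gauge (prevv (2 * r) (2 * j).+1) /\
  gauge (prevv (2 * r) (2 * j).+1) *m MIJ_y t b (2 * j).+1 =
    LXY_y t X Y (2 * j).+1 *m gauge (2 * j).+1.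
Proof.
move=> jr; rewrite gauge_prev_odd // gauge_mul2S.
rewrite /MIJ_x /MIJ_y /LXY_x /LXY_y /LS_x /LS_y oddS odd_mul2 X_odd // Y_odd //.
rewrite /gauge_even /gauge_odd; case: ifP => pj /=.
  exact: odd_arrow_in (divt_in (ltnW jr) pj).
exact: odd_arrow_out (divt_out (ltnW jr) (negbT pj)).
Qed.

Lemma gauge_even_arrow j : (j < r)%N ->
  gauge (2 * j).+2 *m MIJ_x t b (2 * j).+2 =
    LXY_x t X Y (2 * j).+2 *m gauge (prevv (2 * r) (2 * j).+2) /\
  gauge (prevv (2 * r) (2 * j).+2) *m MIJ_y t b (2 * j).+2 =
    LXY_y t X Y (2 * j).+2 *m gauge (2 * j).+2.
Proof.
move=> jr; rewrite gauge_prev_even gauge_mul2SS.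
have -> : gauge_odd j =
    mx2 1 (B - P j.+1 + b (2 * j).+2) 1 (B' - P j.+1 + b (2 * j).+2).
  by rewrite /gauge_odd partial_sumS; congr mx2; ring.
rewrite /MIJ_x /MIJ_y /LXY_x /LXY_y /LS_x /LS_y !oddS odd_mul2 X_even // Y_even //.
rewrite /gauge_even; case: ifP => pj /=.
  exact: even_arrow_in (divt_in jr pj).
exact: even_arrow_out (divt_out jr (negbT pj)).
Qed.

Lemma MIJ_iso_LXY :
  rep_iso 2 (2 * r) (MIJ_x t b) (MIJ_y t b) (LXY_x t X Y) (LXY_y t X Y).
Proof.
exists gauge, (fun i => scaled_adj2 k (gauge i)); split; first exact: gauge_unit.
move=> i /vertex_cases [j jr [-> | ->]].
  exact: gauge_odd_arrow.
exact: gauge_even_arrow.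
Qed.

End Gauge.

Lemma eq_on_run (T : Type) (f : nat -> T) m n : (m <= n)%N ->
  (forall k, (m <= k < n)%N -> f k = f k.+1) -> f m = f n.
Proof.
elim: n => [|n IH]; first by rewrite leqn0 => /eqP ->.
rewrite leq_eqVlt => /orP [/eqP -> // | mn] fk; rewrite ltnS in mn.
rewrite (IH mn) => [|k /andP [mk kn]]; last by rewrite fk // mk ltnW.
by rewrite fk // mn leqnn.
Qed.

Section Transitions.
Variables (V : zmodType) (r : nat) (peak : nat -> bool) (c : nat -> V).

Definition transition j := (j < r)%N && (peak j != peak j.+1).

Hypothesis c_eq0 : forall j, (j < r)%N -> (peak j == peak j.+1) = (c j == 0).
Hypothesis consecutive_cancel : forall j1 j2, (j1 < j2)%N ->
  transition j1 -> transition j2 ->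
  (forall k, (j1 < k < j2)%N -> peak k = peak k.+1) -> c j1 + c j2 = 0.
Hypothesis transition_exists : exists j, transition j.

Lemma transition_alternate : exists2 d, d != 0 &
  forall j, transition j -> c j = if peak j == peak 0 then d else - d.
Proof.
have [j1 tr1 j1_min] := ex_minnP transition_exists.
have /andP [j1r j1t] := tr1.
have peak_j1 : peak 0 = peak j1.
  apply: eq_on_run => // k /andP [_ kj1]; apply/eqP; apply: contraTT (kj1) => kt.
  by rewrite -leqNgt j1_min // /transition kt (ltn_trans kj1 j1r).
exists (c j1); first by rewrite -c_eq0.
elim/ltn_ind => j IH trj; have [jj1 | j1j] := leqP j j1.
  have -> : j = j1 by apply/eqP; rewrite eqn_leq jj1 j1_min.
  by rewrite -peak_j1 eqxx.
have earlier : exists i, (i < j)%N && transition i by exists j1; rewrite j1j.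
have below_j i : (i < j)%N && transition i -> (i <= j)%N by case/andP => /ltnW.
have [k /andP [kj trk] k_max] := ex_maxnP earlier below_j.
have no_between m : (k < m < j)%N -> peak m = peak m.+1.
  move=> /andP [km mj]; apply/eqP; apply: contraTT (km) => mt; rewrite -leqNgt k_max //.
  by rewrite mj /transition mt (ltn_trans mj (proj1 (andP trj))).
have run : peak k.+1 = peak j.
  by apply: eq_on_run => // m /andP [km mj]; apply: no_between; rewrite km.
have -> : c j = - c k.
  by apply/eqP; rewrite -addr_eq0 addrC consecutive_cancel.
rewrite (IH k kj trk); move: (trk) => /andP [_]; rewrite run.
by case: (peak k) (peak j) (peak 0) => [] [] [] //= _; rewrite ?opprK.
Qed.

Lemma two_valued_of_increments (u : nat -> V) :
  (forall j, (j < r)%N -> u j.+1 = u j + c j) ->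
  exists alpha alpha' : V, alpha != alpha' /\
    forall j, (j <= r)%N -> u j = if peak j then alpha' else alpha.
Proof.
move=> u_step; have [d d0 c_sign] := transition_alternate.
exists (u 0%N + (if peak 0 then d else 0)), (u 0%N + (if peak 0 then 0 else d)).
split; first by rewrite (inj_eq (addrI _)); case: (peak 0); rewrite // eq_sym.
elim=> [|j IH] jr; first by case: (peak 0); rewrite addr0.
rewrite u_step // IH ?(ltnW jr) //.
have [pj | pj] := eqVneq (peak j) (peak j.+1).
  have /eqP -> : c j == 0 by rewrite -c_eq0 // pj.
  by rewrite addr0 pj.
rewrite c_sign /transition ?jr ?pj //; move: pj.
by case: (peak j) (peak j.+1) (peak 0) => [] [] [] //= _; rewrite ?addr0 ?add0r ?addrK ?subrr.
Qed.

End Transitions.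

Definition peak_in r (Xp : {set 'I_(2 * r)}) j := inXp Xp (2 * j).

Definition pair_coef0 (K : comNzRingType) (b : nat -> fps K) j :=
  coef (b (2 * j).+1 + b (2 * j).+2) 0.

Section PeakSets.
Variables (r : nat) (Xp : {set 'I_(2 * r)}).
Local Notation peak := (peak_in Xp).

Lemma peak_in_wrap : peak r = peak 0.
Proof. by rewrite /peak_in /inXp muln0 modnn mod0n. Qed.

Lemma inXp_mul2S j : inXp Xp (2 * j + 2) = peak j.+1.
Proof. by rewrite /peak_in mulnSr. Qed.

Lemma peak_in_half (p : 'I_(2 * r)) : ~~ odd p -> peak p./2 = (p \in Xp).
Proof.
move=> p_even; have p_double : (2 * p./2)%N = p by rewrite mul2n even_halfK.
rewrite /peak_in /inXp p_double modn_small //.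
apply/existsP/idP => [[q /andP [qX /eqP qp]] | pX]; last by exists p; rewrite pX eqxx.
by rewrite (_ : p = q) //; apply: val_inj.
Qed.

Lemma Xset_odd j : (j < r)%N -> Xset Xp (2 * j).+1 = peak j.
Proof.
move=> jr; rewrite /Xset /= odd_mul2 half_mul2 /peak_in.
have -> : ((2 * j).+1 <= 2 * r)%N by lia.
by case: inXp; case: inXp.
Qed.

Lemma Xset_even j : (j < r)%N -> Xset Xp (2 * j).+2 = ~~ peak j.+1.
Proof.
move=> jr; rewrite /Xset /= odd_mul2 uphalf_mul2 inXp_mul2S /peak_in.
have -> : ((2 * j).+2 <= 2 * r)%N by lia.
by case: inXp; case: inXp.
Qed.

Lemma Yset_odd j : (j < r)%N -> Yset Xp (2 * j).+1 = ~~ peak j.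
Proof.
by move=> jr; rewrite /Yset Xset_odd //; have -> : ((2 * j).+1 <= 2 * r)%N by lia.
Qed.

Lemma Yset_even j : (j < r)%N -> Yset Xp (2 * j).+2 = peak j.+1.
Proof.
move=> jr; rewrite /Yset Xset_even // negbK.
by have -> : ((2 * j).+2 <= 2 * r)%N by lia.
Qed.

Lemma exists_peak_transition : (forall p : 'I_(2 * r), p \in Xp -> ~~ odd p) ->
  (1 <= #|Xp| < r)%N -> exists j, transition r peak j.
Proof.
move=> Xp_even /andP [Xp_gt0 Xp_ltr].
have [/existsP [j tj] | /existsPn none] := boolP [exists j : 'I_r, transition r peak j].
  by exists j.
have peak_const j : (j <= r)%N -> peak j = peak 0.
  move=> jr; apply/esym/eq_on_run => // k /andP [_ kj]; have kr := leq_trans kj jr.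
  by move: (none (Ordinal kr)); rewrite /transition /= kr negbK => /eqP.
case p0: (peak 0).
  have double_ord (k : 'I_r) : (2 * k < 2 * r)%N by rewrite ltn_pmul2l.
  pose f k := Ordinal (double_ord k).
  have f_inj : injective f by move=> k k' [/eqP]; rewrite eqn_pmul2l // => /eqP/val_inj.
  have : f @: setT \subset Xp.
    apply/subsetP => _ /imsetP [k _ ->].
    have k_le_r : (k <= r)%N := ltnW (ltn_ord k).
    by have := @peak_in_half (f k); rewrite odd_mul2 half_mul2 peak_const // p0 => <-.
  by move/subset_leq_card; rewrite card_imset // cardsT card_ord leqNgt Xp_ltr.
have [p pX] : exists p, p \in Xp by apply/set0Pn; rewrite -card_gt0.
have p_half : (p./2 <= r)%N by rewrite ltnW // ltn_half_double -mul2n.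
by move: (peak_in_half (Xp_even p pX)); rewrite pX peak_const ?p0.
Qed.

End PeakSets.

Lemma coef0_partial_sumS (K : comNzRingType) (b : nat -> fps K) j :
  coef (partial_sum b j.+1) 0 = coef (partial_sum b j) 0 + pair_coef0 b j.
Proof. by rewrite partial_sumS /pair_coef0 !coef_fpsD addrA. Qed.

Section Divisibility.
Variables (K : comNzRingType) (r : nat) (b : nat -> fps K) (Xp : {set 'I_(2 * r)}).
Local Notation peak := (peak_in Xp).

Hypothesis pair_dvd : forall j : nat, (j < r)%N ->
  (inXp Xp (2 * j) = inXp Xp (2 * j + 2) -> tdvd (b (2 * j + 1)%N + b (2 * j + 2)%N)) /\
  (inXp Xp (2 * j) <> inXp Xp (2 * j + 2) -> ~ tdvd (b (2 * j + 1)%N + b (2 * j + 2)%N)).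

Lemma tdvd_pair j : (j < r)%N -> tdvd (b (2 * j).+1 + b (2 * j).+2) <-> peak j = peak j.+1.
Proof.
move=> jr; have [eq_dvd neq_ndvd] := pair_dvd jr.
rewrite inXp_mul2S addn1 addn2 in eq_dvd neq_ndvd; split=> [dvd | /eq_dvd //].
by case: (peak j =P peak j.+1) => // neq; case: (neq_ndvd neq dvd).
Qed.

Lemma pair_coef0_eq0 j : (j < r)%N -> (peak j == peak j.+1) = (pair_coef0 b j == 0).
Proof. by move=> jr; apply/eqP/eqP => [/(tdvd_pair jr)/tdvdP | /tdvdP/(tdvd_pair jr)]. Qed.

Hypothesis consecutive_dvd : forall p q : nat,
  cyc_consecutive
    (fun i => [/\ odd i, (1 <= i <= 2 * r - 1)%N & ~ tdvd (b i + b i.+1)]) p q ->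
  tdvd (b p + b p.+1 + b q + b q.+1).

Lemma consecutive_transitions_cancel j1 j2 : (j1 < j2)%N ->
  transition r peak j1 -> transition r peak j2 ->
  (forall k, (j1 < k < j2)%N -> peak k = peak k.+1) ->
  pair_coef0 b j1 + pair_coef0 b j2 = 0.
Proof.
move=> j12 /andP [j1r t1] /andP [j2r t2] no_between.
have odd_index j : (j < r)%N -> peak j != peak j.+1 ->
    [/\ odd (2 * j).+1, (1 <= (2 * j).+1 <= 2 * r - 1)%N & ~ tdvd (b (2 * j).+1 + b (2 * j).+2)].
  move=> jr tj; split; [by rewrite /= odd_mul2 | lia | move/(tdvd_pair jr)].
  by apply/eqP.
have /tdvdP : tdvd (b (2 * j1).+1 + b (2 * j1).+2 + b (2 * j2).+1 + b (2 * j2).+2).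
  apply: consecutive_dvd; split; [exact: odd_index | exact: odd_index | lia |].
  move=> s [s_odd _ s_ndvd]; rewrite ifT; last lia.
  move=> /andP [lo hi]; apply: s_ndvd.
  have s_eq : s = (2 * s./2).+1 by rewrite -[LHS]odd_double_half s_odd mul2n.
  rewrite s_eq; apply/(tdvd_pair _); [lia | apply: no_between; lia].
by rewrite /pair_coef0 !coef_fpsD !addrA.
Qed.

End Divisibility.

Theorem theorem3p7 (R : realType) (r : nat) (b : nat -> fps (complex R))
    (Xp : {set 'I_(2 * r)}) :
  (2 <= r)%N ->
  \sum_(1 <= i < (2 * r).+1) b i = 0 ->
  (* X' is a set of peaks {0,2,...,2r-2} with 1 <= |X'| < r *)
  (forall p : 'I_(2 * r), p \in Xp -> ~~ odd p) ->
  (1 <= #|Xp| < r)%N ->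
  (forall j : nat, (j < r)%N ->
     (inXp Xp (2 * j) = inXp Xp (2 * j + 2) ->
        tdvd (b (2 * j + 1)%N + b (2 * j + 2)%N)) /\
     (inXp Xp (2 * j) <> inXp Xp (2 * j + 2) ->
        ~ tdvd (b (2 * j + 1)%N + b (2 * j + 2)%N))) ->
  (forall p q : nat,
     cyc_consecutive
       (fun i => [/\ odd i, (1 <= i <= 2 * r - 1)%N & ~ tdvd (b i + b i.+1)])
       p q ->
     tdvd (b p + b p.+1 + b q + b q.+1)) ->
  rep_iso 2 (2 * r)
    (MIJ_x (fpsX (complex R)) b) (MIJ_y (fpsX (complex R)) b)
    (LXY_x (fpsX (complex R)) (Xset Xp) (Yset Xp))
    (LXY_y (fpsX (complex R)) (Xset Xp) (Yset Xp)).
Proof.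
move=> _ sum_b Xp_even Xp_card pair_dvd consecutive_dvd.
have [alpha [alpha' [alpha_neq P_coef0]]] :=
  two_valued_of_increments (pair_coef0_eq0 pair_dvd)
    (consecutive_transitions_cancel pair_dvd consecutive_dvd)
    (exists_peak_transition Xp_even Xp_card)
    (fun j _ => coef0_partial_sumS b j).
apply: MIJ_iso_LXY sum_b (peak_in_wrap Xp) P_coef0 alpha_neq _ _ _ _.
- exact: Xset_odd.
- exact: Xset_even.
- exact: Yset_odd.
- exact: Yset_even.
Qed.
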